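(* Let $q$ be a prime power, let $h(x)\in\mathbb{F}_{q^6}[x]$, let $L(x)=\sum_i a_i x^{q^i}$ be a $q$-polynomial with all $a_i\in\mathbb{F}_q$, and let $\delta\in\mathbb{F}_{q^6}$. Write $w(x)=x^{q^2}-x^q+x+\delta$. Then the polynomial $$f(x)=h(w(x))^{q^4}+h(w(x))^{q^3}-h(w(x))^{q}-h(w(x))+L(x)$$ permutes $\mathbb{F}_{q^6}$ if and only if $L(x)$ permutes $\mathbb{F}_{q^6}$.
   Context: A polynomial permutes $\mathbb{F}_{q^6}$ if it induces a bijection of $\mathbb{F}_{q^6}$. *)

From mathcomp Require Import all_boot all_order all_algebra all_field.
Set Implicit Arguments. Unset Strict Implicit. Unset Printing Implicit Defensive.
Import GRing.Theory.
Local Open Scope ring_scope.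

Definition prime_power (q : nat) : Prop :=
  exists p k : nat, prime p /\ (0 < k)%N /\ q = (p ^ k)%N.

Definition in_Fq (F : finFieldType) (q : nat) (c : F) : bool := c ^+ q == c.

Definition qpoly_fun (F : finFieldType) (q : nat) (a : seq F) (x : F) : F :=
  \sum_(i < size a) a`_i * x ^+ (q ^ i).

Definition wfun (F : finFieldType) (q : nat) (delta x : F) : F :=
  x ^+ (q ^ 2) - x ^+ q + x + delta.

Definition ffun_main (F : finFieldType) (q : nat) (h : {poly F}) (a : seq F)
  (delta x : F) : F :=
  let y := h.[wfun q delta x] in
  y ^+ (q ^ 4) + y ^+ (q ^ 3) - y ^+ q - y + qpoly_fun q a x.

(** Write [w(x) = psi(x) + delta] with [psi(x) = x^(q^2) - x^q + x] and
    [T(y) = y^(q^4) + y^(q^3) - y^q - y], so that [f(x) = T(h(psi x + delta)) + L(x)].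
    The additive maps [psi] and [L] commute, since [L] has coefficients in [F_q], and
    [psi o T = 0] on [F_(q^6)], since [(X^2 - X + 1)(X^4 + X^3 - X - 1) = X^6 - 1].
    Hence [psi o f = L o psi]: if [L] is injective then [f x = f y] forces
    [psi x = psi y] and then [L x = L y]; if [f] is bijective then [L] permutes the
    image of [psi], and a zero [z] of [L] has [psi z = 0], hence [f z = f 0]. *)
From mathcomp Require Import all_boot all_order all_algebra all_field.
From mathcomp Require Import ring.
Set Implicit Arguments. Unset Strict Implicit. Unset Printing Implicit Defensive.
Local Open Scope ring_scope.
Import GRing.Theory.

Section SubMorphism.

Variables (U V : zmodType) (f : U -> V).
Hypothesis fB : {morph f : x y / x - y}.

Lemma morphB_0 : f 0 = 0.
Proof. by rewrite -(subrr 0) fB subrr. Qed.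

Lemma morphB_N : {morph f : x / - x}.
Proof. by move=> x; rewrite -sub0r fB morphB_0 sub0r. Qed.

Lemma morphB_D : {morph f : x y / x + y}.
Proof. by move=> x y; rewrite -{1}[y]opprK fB morphB_N opprK. Qed.

End SubMorphism.

Section TwistedPermutation.

Variables (V : finZmodType) (L psi G : V -> V).
Hypotheses (LB : {morph L : x y / x - y}) (psiB : {morph psi : x y / x - y}).
Hypotheses (psiL : forall x, psi (L x) = L (psi x)) (psiG : forall y, psi (G y) = 0).

Let f x := G (psi x) + L x.

Lemma psi_twist x : psi (f x) = L (psi x).
Proof. by rewrite /f (morphB_D psiB) psiG add0r psiL. Qed.

Lemma twist_inj_of_L : injective L -> injective f.
Proof.
move=> Linj x y fxy.
have psixy : psi x = psi y by apply: Linj; rewrite -!psi_twist fxy.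
by apply: Linj; apply: (addrI (G (psi x))); rewrite {2}psixy.
Qed.

Lemma L_inj_of_twist : bijective f -> injective L.
Proof.
case=> g fK gK.
pose I := [set psi x | x in [set: V]].
have L_injI : {in I &, injective L}.
  apply/imset_injP; rewrite -imset_comp.
  have -> : [set (L \o psi) x | x in [set: V]] = [set psi (f x) | x in [set: V]].
    by apply: eq_imset => x /=; rewrite psi_twist.
  suff -> : [set psi (f x) | x in [set: V]] = I by [].
  apply/setP => u; apply/imsetP/imsetP => -[x _ ->].
    by exists (f x).
  by exists (g x); rewrite ?gK.
have kerL z : L z = 0 -> z = 0.
  move=> Lz; have psiz : psi z = 0.
    have psiI x : psi x \in I by apply/imsetP; exists x.
    rewrite -(morphB_0 psiB); apply: L_injI; rewrite ?psiI //.
    by rewrite -!psiL Lz (morphB_0 LB).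
  by apply: (can_inj fK); rewrite /f psiz Lz (morphB_0 psiB) (morphB_0 LB).
by move=> x y Lxy; apply/eqP; rewrite -subr_eq0; apply/eqP/kerL; rewrite LB Lxy subrr.
Qed.

Lemma bijective_twist : bijective f <-> bijective L.
Proof.
split=> [fbij|Lbij]; apply: injF_bij; first exact: L_inj_of_twist.
exact/twist_inj_of_L/bij_inj.
Qed.

End TwistedPermutation.

Definition qfrob (F : finFieldType) (q i : nat) (x : F) : F := x ^+ (q ^ i).

Definition wlin (F : finFieldType) (q : nat) (x : F) : F :=
  qfrob q 2 x - qfrob q 1 x + x.

Definition tlin (F : finFieldType) (q : nat) (y : F) : F :=
  qfrob q 4 y + qfrob q 3 y - qfrob q 1 y - y.

Lemma pchar_prime_power (F : finFieldType) (q n : nat) :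
  prime_power q -> #|F| = (q ^ n.+1)%N -> [pchar F].-nat q.
Proof.
case=> p [k [p_pr [_ ->]]] cardF.
have pchF : p \in [pchar F].
  by apply: (@card_finPcharP F p (k * n.+1)); rewrite // cardF expnM.
by rewrite pnatX pnatE // pchF.
Qed.

Section QFrobenius.

Variables (F : finFieldType) (q : nat).

Lemma qfrob_comp i j (x : F) : qfrob q i (qfrob q j x) = qfrob q (i + j) x.
Proof. by rewrite /qfrob -exprM -expnD addnC. Qed.

Lemma qfrobM i : {morph qfrob q i : x y / x * y :> F}.
Proof. by move=> x y; rewrite /qfrob exprMn. Qed.

Lemma qfrob_card n (x : F) : #|F| = (q ^ n)%N -> qfrob q n x = x.
Proof. by move=> cardF; rewrite /qfrob -cardF expf_card. Qed.

Lemma qfrob_Fq i (c : F) : in_Fq q c -> qfrob q i c = c.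
Proof.
move/eqP=> cq; elim: i => [|i IHi]; first by rewrite /qfrob expr1.
by rewrite /qfrob expnS mulnC exprM -/(qfrob q i c) IHi.
Qed.

Hypothesis q_pchar : [pchar F].-nat q.

Lemma qfrobB i : {morph qfrob q i : x y / x - y :> F}.
Proof.
have qfrobD (x y : F) : qfrob q i (x + y) = qfrob q i x + qfrob q i y.
  by rewrite /qfrob exprDn_pchar // pnatX q_pchar.
by move=> x y; apply: (addIr (qfrob q i y)); rewrite -qfrobD !subrK.
Qed.

Lemma qpoly_funB (a : seq F) : {morph qpoly_fun q a : x y / x - y}.
Proof.
move=> x y; rewrite /qpoly_fun -sumrB; apply: eq_bigr => i _.
by rewrite -!/(qfrob q i _) qfrobB mulrBr.
Qed.

Lemma qfrob_qpoly_fun (a : seq F) i x : all (in_Fq q) a ->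
  qfrob q i (qpoly_fun q a x) = qpoly_fun q a (qfrob q i x).
Proof.
move=> /allP aFq; rewrite /qpoly_fun.
rewrite (big_morph _ (morphB_D (qfrobB i)) (morphB_0 (qfrobB i))).
apply: eq_bigr => j _; rewrite -!/(qfrob q _ _) qfrobM !qfrob_comp addnC.
by rewrite qfrob_Fq ?aFq ?mem_nth.
Qed.

Lemma wlinB : {morph wlin q : x y / x - y :> F}.
Proof. by move=> x y; rewrite /wlin !qfrobB; ring. Qed.

Lemma wlin_qpoly_fun (a : seq F) x : all (in_Fq q) a ->
  wlin q (qpoly_fun q a x) = qpoly_fun q a (wlin q x).
Proof.
move=> aFq; rewrite /wlin !qfrob_qpoly_fun //.
by rewrite (morphB_D (qpoly_funB a)) (qpoly_funB a).
Qed.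

Lemma wlin_tlin (y : F) : #|F| = (q ^ 6)%N -> wlin q (tlin q y) = 0.
Proof.
move=> cardF; rewrite /wlin /tlin !(qfrobB, morphB_D (qfrobB _), qfrob_comp) /=.
rewrite (qfrob_card y cardF).
have -> : qfrob q 1 y = qfrob q (1 + 0) y by [].
ring.
Qed.

End QFrobenius.

Lemma ffun_mainE (F : finFieldType) q (h : {poly F}) a delta x :
  ffun_main q h a delta x = tlin q h.[wlin q x + delta] + qpoly_fun q a x.
Proof. by rewrite /ffun_main /tlin /wlin /wfun /qfrob expn1. Qed.

Theorem mainTheorem9 (F : finFieldType) (q : nat) (hq : prime_power q)
  (hF : #|F| = (q ^ 6)%N) (h : {poly F}) (a : seq F)
  (ha : all (in_Fq q) a) (delta : F) :
  bijective (ffun_main q h a delta) <-> bijective (qpoly_fun q a).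
Proof.
have q_pchar : [pchar F].-nat q := pchar_prime_power hq hF.
have wlin_tlin_h y : wlin q (tlin q h.[y + delta]) = 0 by rewrite wlin_tlin.
apply: iff_trans (bijective_twist (qpoly_funB q_pchar a) (wlinB q_pchar)
  (fun x => wlin_qpoly_fun q_pchar x ha) wlin_tlin_h).
by split=> /eq_bij; apply=> x; rewrite ffun_mainE.
Qed.
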